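(* Let $t\ge3$, let $\mathcal C$ be an $(n,k,r,t)$-SLRC, let $G$ be a minimal repair graph of $\mathcal C$, and let $v$ be a source of $G$ with $\mathrm{Out}(v)=\{v_1,v_2\}$, $v_1\neq v_2$. Then: 1) $\mathrm{Out}(v_1)\ne\emptyset$ or $\mathrm{Out}(v_2)\ne\emptyset$; 2) if $\{v_1\}=\mathrm{Out}(u)$ for some source $u$, then $\mathrm{Out}(v_2)\ne\emptyset$; 3) if $\{v_1\}=\mathrm{Out}(u)$ for some source $u$, then $|\mathrm{Out}(w)|\ge2$ for every source $w\in\mathrm{In}(v_2)$.
   Context: For an $[n,k]$ linear code $\mathcal C$ over a finite field $\mathbb F$, a recovering set of $i\in[n]$ is a set $R\subseteq[n]\setminus\{i\}$ with nonzero $a_j\in\mathbb F$ such that $x_i=\sum_{j\in R}a_jx_j$ for all $x\in\mathcal C$; standing assumption: recovering sets have size $2\le|R|\le r<k$. $\mathcal C$ is an $(n,k,r,t)$-SLRC if every $E\subseteq[n]$ with $|E|\le t$ can be indexed $\{i_1,\dots,i_{|E|}\}$ so that each $i_\ell$ has a recovering set $R_\ell\subseteq([n]\setminus E)\cup\{i_1,\dots,i_{\ell-1}\}$. A repair graph of $\mathcal C$ is a directed acyclic graph on vertex set $[n]$ such that for every vertex $i$ with nonempty in-neighbourhood $\mathrm{In}(i)$, $\mathrm{In}(i)$ is a recovering set of $i$. A source is a vertex with no in-neighbours. A minimal repair graph is a repair graph with the minimum number of sources among all repair graphs of $\mathcal C$. $\mathrm{Out}(v)$ denotes the set of out-neighbours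 of $v$. *)

From HB Require Import structures.
From mathcomp Require Import all_boot all_order all_algebra all_fingroup all_field.
Set Implicit Arguments. Unset Strict Implicit. Unset Printing Implicit Defensive.
Import GRing.Theory.
Local Open Scope ring_scope.

(* A linear [n,k] code over a finite field F is a subspace C of F^n = 'rV[F]_n
   with \dim C = k.  Coordinates are indexed by 'I_n ( = [n] ). *)

Definition recovering_set (F : finFieldType) (n r : nat)
  (C : {vspace 'rV[F]_n}) (i : 'I_n) (R : {set 'I_n}) : Prop :=
  [/\ i \notin R, (2 <= #|R| <= r)%N &
      exists a : 'I_n -> F, (forall j, j \in R -> a j != 0) /\
        (forall x : 'rV[F]_n, x \in C -> x 0 i = \sum_(j in R) a j * x 0 j)].

Definition SLRC (F : finFieldType) (n k r t : nat) (C : {vspace 'rV[F]_n}) : Prop :=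
  \dim C = k /\ (r < k)%N /\
  forall E : {set 'I_n}, (#|E| <= t)%N ->
    exists s : seq 'I_n, [/\ uniq s, [set x in s] = E &
      forall l, (l < size s)%N -> forall x0 : 'I_n,
        exists R : {set 'I_n}, recovering_set r C (nth x0 s l) R /\
          R \subset (~: E) :|: [set x in take l s]].

Definition In_nb (n : nat) (e : rel 'I_n) (v : 'I_n) : {set 'I_n} := [set u | e u v].
Definition Out_nb (n : nat) (e : rel 'I_n) (v : 'I_n) : {set 'I_n} := [set w | e v w].

Definition acyclic (n : nat) (e : rel 'I_n) : Prop :=
  forall u v, e u v -> ~~ connect e v u.

Definition is_source (n : nat) (e : rel 'I_n) (v : 'I_n) : Prop := In_nb e v = set0.

Definition sources (n : nat) (e : rel 'I_n) : {set 'I_n} := [set v | In_nb e v == set0].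

Definition repair_graph (F : finFieldType) (n r : nat) (C : {vspace 'rV[F]_n})
  (e : rel 'I_n) : Prop :=
  acyclic e /\ forall i, In_nb e i != set0 -> recovering_set r C i (In_nb e i).

Definition minimal_repair_graph (F : finFieldType) (n r : nat) (C : {vspace 'rV[F]_n})
  (e : rel 'I_n) : Prop :=
  repair_graph r C e /\
  forall e' : rel 'I_n, repair_graph r C e' -> (#|sources e| <= #|sources e'|)%N.

From mathcomp Require Import all_boot all_order all_algebra all_fingroup all_field.
From mathcomp Require Import zify.
From Stdlib Require Import IndefiniteDescription.
Set Implicit Arguments. Unset Strict Implicit. Unset Printing Implicit Defensive.
Import GRing.Theory.

(* Let E be a set of at most t coordinates that is closed under out-neighbours
   in a repair graph G.  Recovering E sequentially, as the SLRC property allows,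
   gives each vertex of E a recovering set made of vertices outside E or earlier
   in the order; redirecting the in-edges of E to these sets yields a repair
   graph whose sources are those of G outside E.  So in a minimal repair graph
   no such E contains a source.  Moreover, if a source u has the single
   out-neighbour y, reversing the edge u -> y keeps the graph a minimal repair
   graph.  Each claim then follows because otherwise {v, v1, v2} would be closed
   in G, {v, u, v2} after reversing u -> v1, and {v, u, w} after reversing
   u -> v1 and w -> v2. *)

Lemma connect_sub_preorder (T : finType) (e R : rel T) :
  reflexive R -> transitive R -> subrel e R -> subrel (connect e) R.
Proof.
move=> R_refl R_trans eR x _ /connectP[p e_p ->]; elim: p x e_p => //= y p IHp x.
by case/andP=> /eR Rxy /IHp; apply: R_trans Rxy.
Qed.

Section Neighbourhoods.
Variables (n : nat) (e : rel 'I_n).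

Lemma is_sourceP v : is_source e v <-> forall a, ~~ e a v.
Proof.
rewrite /is_source; split=> [/setP src a | no_in]; first by have := src a; rewrite !inE => ->.
by apply/setP => a; rewrite !inE (negbTE (no_in a)).
Qed.

Lemma sourcesP v : reflect (is_source e v) (v \in sources e).
Proof. by rewrite inE; apply: eqP. Qed.

Lemma Out_nbE a A : Out_nb e a = A -> forall b, e a b = (b \in A).
Proof. by move=> <- b; rewrite inE. Qed.

End Neighbourhoods.

Section RecoveringSetSwap.
Local Open Scope ring_scope.

Lemma recovering_set_swap (F : finFieldType) (n r : nat) (C : {vspace 'rV[F]_n})
    (y u : 'I_n) (R : {set 'I_n}) :
  recovering_set r C y R -> u \in R -> y != u ->
  recovering_set r C u (y |: (R :\ u)).
Proof.
move=> [yR R_card [a [a_nz a_rec]]] uR yu.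
have au_nz : a u != 0 := a_nz u uR.
have yRu : y \notin R :\ u by rewrite in_setD1 (negbTE yR) andbF.
split.
- by rewrite !inE negb_or eq_sym yu eqxx.
- by rewrite cardsU1 yRu; rewrite (cardsD1 u R) uR in R_card.
exists (fun j => if j == y then (a u)^-1 else - (a j / a u)); split.
  move=> j; rewrite !inE; case: eqP => [_|_ /andP[_ jR]]; first by rewrite invr_eq0.
  by rewrite oppr_eq0 mulf_neq0 ?invr_eq0 ?a_nz.
move=> x xC; rewrite big_setU1 //= eqxx (a_rec x xC) (big_setD1 u uR) /=.
have -> : \sum_(j in R :\ u) (if j == y then (a u)^-1 else - (a j / a u)) * x 0 j
    = - (a u)^-1 * \sum_(j in R :\ u) a j * x 0 j.
  rewrite mulr_sumr; apply: eq_bigr => j; rewrite in_setD1 => /andP[_ jR].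
  have /negbTE -> : j != y by apply: contraNneq yR => <-.
  by rewrite mulNr mulNr mulrA [a j * _]mulrC.
by rewrite mulrDr mulrA mulVf // mul1r mulNr addrK.
Qed.

End RecoveringSetSwap.

Section Reroute.
Variables (F : finFieldType) (n r : nat) (C : {vspace 'rV[F]_n}) (e : rel 'I_n).
Variables (E : {set 'I_n}) (f : 'I_n -> {set 'I_n}) (rank : 'I_n -> nat).
Hypothesis e_repair : repair_graph r C e.
Hypothesis E_closed : forall a b, a \in E -> e a b -> b \in E.
Hypothesis f_recovers : forall b, b \in E -> recovering_set r C b (f b).
Hypothesis f_ranked : forall a b, b \in E -> a \in f b -> a \in E -> rank a < rank b.

Definition reroute : rel 'I_n := fun a b => if b \in E then a \in f b else e a b.

Lemma In_nb_reroute b : In_nb reroute b = if b \in E then f b else In_nb e b.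
Proof. by apply/setP => a; rewrite !inE /reroute; case: ifP; rewrite ?inE. Qed.

Lemma reroute_edge_in a b : a \in E -> reroute a b -> (b \in E) && (rank a < rank b).
Proof.
rewrite /reroute => aE; case: ifP => [bE /f_ranked-> //|bE /(E_closed aE)].
by rewrite bE.
Qed.

Lemma reroute_connect_in x y :
  connect reroute x y -> x \in E -> (y \in E) && (rank x <= rank y).
Proof.
move=> xy; apply/implyP; move: x y xy.
apply: (connect_sub_preorder (R := [rel x y | (x \in E) ==> (y \in E) && (rank x <= rank y)])).
- by move=> x /=; rewrite leqnn andbT implybb.
- move=> y x z /= /implyP xy /implyP yz; apply/implyP => /xy /andP[/yz /andP[-> le_yz] le_xy].
  exact: leq_trans le_xy le_yz.
- move=> a b ab /=; apply/implyP => /reroute_edge_in /(_ ab) /andP[-> /ltnW //].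
Qed.

Lemma reroute_connect_out x y : connect reroute x y -> y \notin E -> connect e x y.
Proof.
move=> xy yE; suff /andP[] : (x \notin E) && connect e x y by [].
move: yE; apply/implyP; move: x y xy.
apply: (connect_sub_preorder
  (R := [rel x y | (y \notin E) ==> (x \notin E) && connect e x y])).
- by move=> x /=; rewrite connect0 andbT implybb.
- move=> y x z /= /implyP xy /implyP yz; apply/implyP.
  by move=> /yz /andP[/xy /andP[-> xy'] yz']; rewrite (connect_trans xy' yz').
- move=> a b; rewrite /reroute /=; case: ifP => //= bE ab.
  by rewrite (connect1 ab) andbT; apply: contraFN bE => /E_closed; apply.
Qed.

Lemma reroute_acyclic : acyclic reroute.
Proof.
move=> a b ab; apply/negP => ba; case: (boolP (a \in E)) => aE.
  have /andP[bE lt_ab] := reroute_edge_in aE ab.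
  have /andP[_ le_ba] := reroute_connect_in ba bE.
  by move: (leq_trans lt_ab le_ba); rewrite ltnn.
have bE : b \notin E.
  by apply: contra aE => bE; have /andP[] := reroute_connect_in ba bE.
move: ab; rewrite /reroute (negbTE bE) => ab.
by have := e_repair.1 a b ab; rewrite (reroute_connect_out ba aE).
Qed.

Lemma reroute_repair_graph : repair_graph r C reroute.
Proof.
split=> [|i]; first exact: reroute_acyclic.
rewrite In_nb_reroute; case: ifP => [iE _|_]; [exact: f_recovers | exact: e_repair.2].
Qed.

Lemma sources_reroute : sources reroute = sources e :\: E.
Proof.
apply/setP => i; rewrite !inE In_nb_reroute; case: ifP => //= iE.
have [_ /andP[f_card _] _] := f_recovers iE.
by apply/negbTE/set0Pn/card_gt0P; apply: leq_trans f_card.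
Qed.

End Reroute.

Lemma SLRC_ranked_recovery (F : finFieldType) (n k r t : nat) (C : {vspace 'rV[F]_n})
    (E : {set 'I_n}) :
  SLRC k r t C -> #|E| <= t ->
  exists f : 'I_n -> {set 'I_n}, exists rank : 'I_n -> nat,
    (forall b, b \in E -> recovering_set r C b (f b)) /\
    (forall a b, b \in E -> a \in f b -> a \in E -> rank a < rank b).
Proof.
case=> _ [_ SLRC_E] /SLRC_E[s [_ sE s_rec]].
have memE b : (b \in E) = (b \in s) by rewrite -sE inE.
have /functional_choice[f f_rec] : forall b, exists R : {set 'I_n}, b \in E ->
    recovering_set r C b R /\ R \subset ~: E :|: [set a in take (index b s) s].
  move=> b; case: (boolP (b \in E)) => bE; last by exists set0.
  have bs : b \in s by rewrite -memE.
  have [|R [R_rec R_sub]] := s_rec (index b s) _ b; first by rewrite index_mem.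
  by exists R; rewrite nth_index in R_rec.
exists f, (index^~ s); split=> [b /f_rec[] // | a b bE afb aE].
have [_ /subsetP/(_ a afb)] := f_rec b bE.
by rewrite !inE aE /= in_take // -memE.
Qed.

Lemma minimal_sources_outside_closed (F : finFieldType) (n k r t : nat)
    (C : {vspace 'rV[F]_n}) (e : rel 'I_n) (E : {set 'I_n}) :
  SLRC k r t C -> minimal_repair_graph r C e -> #|E| <= t ->
  (forall a, a \in E -> Out_nb e a \subset E) -> sources e :&: E = set0.
Proof.
move=> C_SLRC [e_repair e_min] E_card E_closed.
have {}E_closed a b : a \in E -> e a b -> b \in E.
  by move=> /E_closed/subsetP E_Out ab; apply: E_Out; rewrite inE.
have [f [rank [f_rec f_ranked]]] := SLRC_ranked_recovery C_SLRC E_card.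
have := e_min _ (reroute_repair_graph e_repair E_closed f_rec f_ranked).
rewrite (sources_reroute _ f_rec) cardsD => le_sub.
apply/eqP; rewrite -cards_eq0 -leqn0.
have : #|sources e :&: E| <= #|sources e| by apply/subset_leq_card/subsetIl.
lia.
Qed.

Lemma minimal_no_closed_source_triple (F : finFieldType) (n k r t : nat)
    (C : {vspace 'rV[F]_n}) (e : rel 'I_n) (v a b : 'I_n) :
  3 <= t -> SLRC k r t C -> minimal_repair_graph r C e -> is_source e v ->
  Out_nb e v \subset [set v; a; b] -> Out_nb e a \subset [set v; a; b] ->
  Out_nb e b \subset [set v; a; b] -> False.
Proof.
move=> t3 C_SLRC e_min /sourcesP v_src Ov Oa Ob.
have T_card : #|[set v; a; b]| <= t.
  by apply: leq_trans t3; rewrite -setUA cardsU1 cards2; case: (_ \notin _); case: (_ != _).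
suff: sources e :&: [set v; a; b] = set0 by move/setP/(_ v); rewrite in_setI v_src !inE eqxx.
apply: minimal_sources_outside_closed C_SLRC e_min T_card _.
by move=> x; rewrite !inE -orbA => /or3P[] /eqP->.
Qed.

Section ReverseEdge.
Variables (n : nat) (e : rel 'I_n) (u y : 'I_n).

(* The edge u -> y is turned around and u inherits the other in-neighbours of y. *)
Definition reverse_edge : rel 'I_n := fun a b =>
  if b == u then (a == y) || e a y && (a != u)
  else if b == y then false else e a b.

Lemma In_nb_reverse_edge b : In_nb reverse_edge b =
  if b == u then y |: (In_nb e y :\ u) else if b == y then set0 else In_nb e b.
Proof.
apply/setP => a; rewrite [in LHS]inE /reverse_edge.
by case: (b == u); last case: (b == y); rewrite !inE // andbC.
Qed.

Lemma Out_nb_reverse_edge_sub a (A : {set 'I_n}) :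
  Out_nb e a \subset A -> Out_nb reverse_edge a \subset u |: (A :\ y).
Proof.
move/subsetP => OA; apply/subsetP => b; rewrite !inE /reverse_edge.
by case: ifP => // _; case: ifP => // _ ab; apply: OA; rewrite inE.
Qed.

Lemma reverse_edge_source a : a != u -> is_source e a -> is_source reverse_edge a.
Proof.
move=> au /is_sourceP a_src; apply/is_sourceP => b.
by rewrite /reverse_edge (negbTE au); case: ifP.
Qed.

Lemma Out_nb_reverse_edge_id a :
  a != y -> ~~ e a y -> ~~ e a u -> Out_nb reverse_edge a = Out_nb e a.
Proof.
move=> /negbTE a_neq_y /negbTE not_e_a_y /negbTE not_e_a_u.
apply/setP => b; rewrite !inE /reverse_edge a_neq_y not_e_a_y /=.
by case: eqP => [->|_]; [rewrite not_e_a_u | case: eqP => [->|]; rewrite ?not_e_a_y].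
Qed.

Variables (F : finFieldType) (r : nat) (C : {vspace 'rV[F]_n}).
Hypothesis u_src : is_source e u.
Hypothesis Out_u : Out_nb e u = [set y].

Let e_u b : e u b = (b == y).
Proof. by rewrite (Out_nbE Out_u) inE. Qed.

Let y_neq_u : y != u.
Proof. by have := (is_sourceP _ _).1 u_src u; apply: contraNneq => yu; rewrite -{2}yu e_u. Qed.

Lemma reverse_edge_sink b : ~~ reverse_edge u b.
Proof.
rewrite /reverse_edge eqxx andbF orbF [u == y]eq_sym (negbTE y_neq_u) e_u.
by case: eqP => // _; case: eqP.
Qed.

Lemma reverse_edge_connect x z :
  connect reverse_edge x z -> z != u -> (x != u) && connect e x z.
Proof.
move=> xz; apply/implyP; move: x z xz.
apply: (connect_sub_preorder
  (R := [rel x z | (z != u) ==> (x != u) && connect e x z])).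
- by move=> x /=; rewrite connect0 andbT implybb.
- move=> y' x z /= /implyP xy /implyP yz; apply/implyP.
  by move=> /yz /andP[/xy /andP[-> xy'] yz']; rewrite (connect_trans xy' yz').
- move=> a b ab /=; apply/implyP => bu.
  have -> : a != u by apply: contraNneq (reverse_edge_sink b) => <-.
  by move: ab; rewrite /reverse_edge (negbTE bu); case: ifP => // _ /connect1.
Qed.

Lemma reverse_edge_repair_graph : repair_graph r C e -> repair_graph r C reverse_edge.
Proof.
case=> e_acyclic e_rec; split.
  move=> a b ab; apply/negP => /reverse_edge_connect.
  have au : a != u by apply: contraNneq (reverse_edge_sink b) => <-.
  move=> /(_ au) /andP[bu ba].
  move: ab; rewrite /reverse_edge (negbTE bu); case: ifP => // _ ab.
  by move/negP: (e_acyclic a b ab).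
move=> i; rewrite In_nb_reverse_edge.
case: (eqVneq i u) => [-> _|iu]; last by case: (eqVneq i y) => _; [rewrite eqxx | exact: e_rec].
have u_In_y : u \in In_nb e y by rewrite inE e_u.
by apply: (recovering_set_swap _ u_In_y y_neq_u); apply/e_rec/set0Pn; exists u.
Qed.

Lemma sources_reverse_edge : sources reverse_edge = y |: (sources e :\ u).
Proof.
apply/setP => i; rewrite [in LHS]inE In_nb_reverse_edge !inE.
case: (eqVneq i u) => [->|_]; last by case: (eqVneq i y) => [->|_]; rewrite ?eqxx.
rewrite [u == y]eq_sym (negbTE y_neq_u) /=.
by apply/negbTE/set0Pn; exists y; rewrite !inE eqxx.
Qed.

Lemma reverse_edge_minimal :
  minimal_repair_graph r C e -> minimal_repair_graph r C reverse_edge.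
Proof.
case=> e_repair e_min; split=> [|e' /e_min]; first exact: reverse_edge_repair_graph.
have u_sources : u \in sources e by apply/sourcesP.
have y_sources : y \notin sources e.
  by apply/sourcesP => /is_sourceP /(_ u); rewrite e_u eqxx.
rewrite sources_reverse_edge cardsU1 in_setD1 (negbTE y_sources) andbF.
by rewrite (cardsD1 u (sources e)) u_sources.
Qed.

End ReverseEdge.

Section SourceWithTwoSuccessors.
Variables (F : finFieldType) (n k r t : nat) (C : {vspace 'rV[F]_n}).
Variables (e : rel 'I_n) (v v1 v2 : 'I_n).
Hypothesis t_ge3 : 3 <= t.
Hypothesis C_SLRC : SLRC k r t C.
Hypothesis e_min : minimal_repair_graph r C e.
Hypothesis v_src : is_source e v.
Hypothesis Out_v : Out_nb e v = [set v1; v2].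
Hypothesis v1_neq_v2 : v1 != v2.

Let e_v b : e v b = (b == v1) || (b == v2).
Proof. by rewrite (Out_nbE Out_v) !inE. Qed.

Let e_v_v1 : e v v1.
Proof. by rewrite e_v eqxx. Qed.

Let e_v_v2 : e v v2.
Proof. by rewrite e_v eqxx orbT. Qed.

Let Out_v_sub : Out_nb e v \subset [set v1; v2].
Proof. by rewrite Out_v subxx. Qed.

Lemma source_successors_not_both_sinks : Out_nb e v1 != set0 \/ Out_nb e v2 != set0.
Proof.
case: (eqVneq (Out_nb e v1) set0) => [Out_v1|]; last by left.
case: (eqVneq (Out_nb e v2) set0) => [Out_v2|]; last by right.
exfalso; apply: (minimal_no_closed_source_triple (a := v1) (b := v2) t_ge3 C_SLRC e_min v_src);
  rewrite ?Out_v1 ?Out_v2 ?sub0set //.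
by apply: subset_trans Out_v_sub _; apply/subsetP => x; rewrite !inE; do 4?[case: eqP => //=].
Qed.

Section SourceAboveFirstSuccessor.
Variables (u : 'I_n).
Hypothesis u_src : is_source e u.
Hypothesis Out_u : Out_nb e u = [set v1].

Let e1 := reverse_edge e u v1.
Let e1_min : minimal_repair_graph r C e1 := reverse_edge_minimal u_src Out_u e_min.

Let Out_u_sub : Out_nb e u \subset [set v1].
Proof. by rewrite Out_u subxx. Qed.

Let not_e_u_v2 : ~~ e u v2.
Proof. by rewrite (Out_nbE Out_u) inE eq_sym. Qed.

Let v_neq_u : v != u.
Proof. by apply: contraTneq e_v_v2 => ->. Qed.

Lemma second_successor_not_sink : Out_nb e v2 != set0.
Proof.
apply/eqP => Out_v2.
have v_src1 := reverse_edge_source v1 v_neq_u v_src.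
apply: (minimal_no_closed_source_triple (a := u) (b := v2) t_ge3 C_SLRC e1_min v_src1).
- apply: subset_trans (Out_nb_reverse_edge_sub u v1 Out_v_sub) _.
  by apply/subsetP => x; rewrite !inE; do 5?[case: eqP => //=].
- apply: subset_trans (Out_nb_reverse_edge_sub u v1 Out_u_sub) _.
  by apply/subsetP => x; rewrite !inE; do 5?[case: eqP => //=].
- apply: subset_trans (Out_nb_reverse_edge_sub u v1 (_ : Out_nb e v2 \subset set0)) _.
    by rewrite Out_v2 subxx.
  by apply/subsetP => x; rewrite !inE; do 5?[case: eqP => //=].
Qed.

Lemma source_into_second_successor_out_ge2 w :
  is_source e w -> w \in In_nb e v2 -> 2 <= #|Out_nb e w|.
Proof.
move=> w_src; rewrite inE => e_w_v2; rewrite leqNgt; apply/negP => Out_w_small.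
have Out_w : Out_nb e w = [set v2].
  by apply/eqP; rewrite eq_sym eqEcard sub1set inE e_w_v2 cards1.
have Out_w_sub : Out_nb e w \subset [set v2] by rewrite Out_w subxx.
have w_neq_u : w != u by apply: contraTneq e_w_v2 => ->.
move/is_sourceP: (w_src) => no_edge_to_w.
have w_neq_v1 : w != v1 by apply: contraTneq e_v_v1 => <-; exact: no_edge_to_w.
have not_e_w_v1 : ~~ e w v1 by rewrite (Out_nbE Out_w) inE.
have v_neq_w : v != w by apply: contraTneq e_v_v1 => ->.
have Out1_w : Out_nb e1 w = [set v2].
  by rewrite Out_nb_reverse_edge_id // ((is_sourceP _ _).1 u_src).
have e2_min := reverse_edge_minimal (reverse_edge_source v1 w_neq_u w_src) Out1_w e1_min.
have v_src2 := reverse_edge_source v2 v_neq_w (reverse_edge_source v1 v_neq_u v_src).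
apply: (minimal_no_closed_source_triple (a := u) (b := w) t_ge3 C_SLRC e2_min v_src2).
- apply: subset_trans (Out_nb_reverse_edge_sub w v2 (Out_nb_reverse_edge_sub u v1 Out_v_sub)) _.
  by apply/subsetP => x; rewrite !inE; do 5?[case: eqP => //=].
- apply: subset_trans (Out_nb_reverse_edge_sub w v2 (Out_nb_reverse_edge_sub u v1 Out_u_sub)) _.
  by apply/subsetP => x; rewrite !inE; do 5?[case: eqP => //=].
- apply: subset_trans (Out_nb_reverse_edge_sub w v2 (Out_nb_reverse_edge_sub u v1 Out_w_sub)) _.
  by apply/subsetP => x; rewrite !inE; do 5?[case: eqP => //=].
Qed.

End SourceAboveFirstSuccessor.

End SourceWithTwoSuccessors.

Theorem corollary2 (F : finFieldType) (n k r t : nat) (C : {vspace 'rV[F]_n})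
  (e : rel 'I_n) (v v1 v2 : 'I_n) :
  (3 <= t)%N -> SLRC k r t C -> minimal_repair_graph r C e ->
  is_source e v -> Out_nb e v = [set v1; v2] -> v1 != v2 ->
  [/\ Out_nb e v1 != set0 \/ Out_nb e v2 != set0,
      (exists u, is_source e u /\ Out_nb e u = [set v1]) -> Out_nb e v2 != set0 &
      (exists u, is_source e u /\ Out_nb e u = [set v1]) ->
        forall w, is_source e w -> w \in In_nb e v2 -> (2 <= #|Out_nb e w|)%N].
Proof.
move=> t_ge3 C_SLRC e_min v_src Out_v v1_neq_v2.
split=> [|[u [u_src Out_u]]|[u [u_src Out_u]]].
- exact: (source_successors_not_both_sinks t_ge3 C_SLRC e_min v_src Out_v).
- exact: (second_successor_not_sink t_ge3 C_SLRC e_min v_src Out_v v1_neq_v2 u_src Out_u).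
- exact: (source_into_second_successor_out_ge2
    t_ge3 C_SLRC e_min v_src Out_v v1_neq_v2 u_src Out_u).
Qed.
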